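(* Let $\alpha$ be an admissible anisotropy. There exists $C>0$ such that for every $j\ge0$ and every $f\in\mathcal S'(\mathbb R^2)$ whose Fourier transform $\hat f$ is a locally square-integrable function, \[C^{-1}\sum_{(j_1,j_2)\in\Gamma_j(\alpha)}\|\phi_{j_1,j_2}\hat f\|_{L^2}^2\le\|g_j^\alpha\hat f\|_{L^2}^2\le C\sum_{(j_1,j_2)\in\Gamma_j(\alpha)}\|\phi_{j_1,j_2}\hat f\|_{L^2}^2,\] where $g_j^\alpha=\sum_{(j_1,j_2)\in\Gamma_j(\alpha)}\phi_{j_1,j_2}$.
   Context: $\mathbb N=\{0,1,2,\dots\}$, $[x]$ integer part. Admissible anisotropy: $\alpha_i\ge0$, $\alpha_1+\alpha_2=2$. Hyperbolic resolution of unity: $\theta_0\in\mathcal S(\mathbb R)$, $\theta_0\ge0$, supported in $[-2,2]$, $=1$ on $[-1,1]$; $\theta_j(t)=\theta_0(2^{-j}t)-\theta_0(2^{-(j-1)}t)$ ($j\ge1$), assumed nonnegative; $\phi_{j_1,j_2}(\xi)=\theta_{j_1}(\xi_1)\theta_{j_2}(\xi_2)$. $\Gamma_j(\alpha)=\Gamma_j^{HL}\cup\Gamma_j^{LH}\cup\Gamma_j^{HH}$ with $\Gamma_j^{HL}=\{(j_1,j_2)\in\mathbb N^2:[(j-1)\alpha_1]-1\le j_1\le[j\alpha_1]+1,\ 0\le j_2\le[(j-1)\alpha_2]-1\}$, $\Gamma_j^{LH}=\{(j_1,j_2)\in\mathbb N^2:0\le j_1\le[(j-1)\alpha_1]-1,\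 [(j-1)\alpha_2]-1\le j_2\le[j\alpha_2]+1\}$, $\Gamma_j^{HH}=\{(j_1,j_2)\in\mathbb N^2:[(j-1)\alpha_1]-1\le j_1\le[j\alpha_1]+1,\ [(j-1)\alpha_2]-1\le j_2\le[j\alpha_2]+1\}$. *)

From HB Require Import structures.
From mathcomp Require Import all_boot all_order all_algebra.
From mathcomp Require Import all_classical all_reals all_analysis.
Set Implicit Arguments. Unset Strict Implicit. Unset Printing Implicit Defensive.
Import Order.TTheory GRing.Theory Num.Theory.
Local Open Scope ring_scope.

Section Defs.
Variable R : realType.

Definition schwartz (f : R -> R) : Prop :=
  (forall n x, derivable (derive1n n f) x 1) /\
  (forall k n : nat, exists M : R, forall x, `|x| ^+ k * `|derive1n n f x| <= M).

Definition theta (th0 : R -> R) (j : nat) (t : R) : R :=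
  if j is j'.+1 then th0 (t / 2 ^+ j) - th0 (t / 2 ^+ j') else th0 t.

Definition phi (th0 : R -> R) (j1 j2 : nat) (xi : R * R) : R :=
  theta th0 j1 xi.1 * theta th0 j2 xi.2.

Definition ip (x : R) : int := Num.floor x.

Definition lowb (a : R) (j : nat) : int := ip ((j%:R - 1) * a) - 1.
Definition upb (a : R) (j : nat) : int := ip (j%:R * a) + 1.

Definition GammaHL (a1 a2 : R) (j j1 j2 : nat) : bool :=
  (lowb a1 j <= j1%:Z <= upb a1 j) && (j2%:Z <= ip ((j%:R - 1) * a2) - 1).
Definition GammaLH (a1 a2 : R) (j j1 j2 : nat) : bool :=
  (j1%:Z <= ip ((j%:R - 1) * a1) - 1) && (lowb a2 j <= j2%:Z <= upb a2 j).
Definition GammaHH (a1 a2 : R) (j j1 j2 : nat) : bool :=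
  (lowb a1 j <= j1%:Z <= upb a1 j) && (lowb a2 j <= j2%:Z <= upb a2 j).
Definition inGamma (a1 a2 : R) (j j1 j2 : nat) : bool :=
  [|| GammaHL a1 a2 j j1 j2, GammaLH a1 a2 j j1 j2 | GammaHH a1 a2 j j1 j2].

(* Enumeration bound: for admissible alpha (a_i <= 2), every (j1,j2) in
   Gamma_j satisfies j1, j2 <= [j a_i] + 1 <= 2j+1 < 2j+2, so summing over
   j1, j2 < 2j+2 filtered by inGamma is exactly the sum over Gamma_j. *)
Definition gbound (j : nat) : nat := (2 * j + 2)%N.

Definition gfun (th0 : R -> R) (a1 a2 : R) (j : nat) (xi : R * R) : R :=
  \sum_(j1 < gbound j) \sum_(j2 < gbound j | inGamma a1 a2 j j1 j2)
     phi th0 j1 j2 xi.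

Definition leb2 := ((@lebesgue_measure R) \x (@lebesgue_measure R))%E.

(* A complex-valued function F = u + i v on R^2 is given by its real and
   imaginary parts; |F|^2 = u^2 + v^2. *)
Definition L2sq (h : R * R -> R) (u v : R * R -> R) : \bar R :=
  (\int[leb2]_(xi in [set: R * R]) ((h xi * u xi) ^+ 2 + (h xi * v xi) ^+ 2)%:E)%E.

(* locally square integrable on R^2: measurable, and finite L^2 norm on
   every box [-r,r]^2 (hence on every compact set) *)
Definition locL2 (u v : R * R -> R) : Prop :=
  measurable_fun [set: R * R] u /\ measurable_fun [set: R * R] v /\
  forall r : R, (\int[leb2]_(xi in [set xi : R * R | (`|xi.1| <= r)%R /\ (`|xi.2| <= r)%R])
                   (u xi ^+ 2 + v xi ^+ 2)%:E < +oo)%E.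

End Defs.

(* At a point t at most two consecutive dyadic pieces theta_k(t) are nonzero,
   since theta_k is supported in 2^(k-1) < |t| <= 2^(k+1).  Hence at every
   frequency xi at most four of the phi_{j1,j2}(xi) are nonzero, and for such a
   family of nonnegative numbers Cauchy-Schwarz gives
     sum a_p^2 <= (sum a_p)^2 <= 4 sum a_p^2.
   So (g_j^alpha)^2 and sum phi_{j1,j2}^2 are pointwise comparable with
   constant 4; multiplying by |f^|^2 and integrating gives the claim. *)

From HB Require Import structures.
From mathcomp Require Import all_boot all_order all_algebra.
From mathcomp Require Import all_classical all_reals all_analysis measurable_realfun.
From mathcomp Require Import ring lra zify.
Set Implicit Arguments. Unset Strict Implicit. Unset Printing Implicit Defensive.
Import Order.TTheory GRing.Theory Num.Theory.
Local Open Scope ring_scope.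

Section SumOfSquares.
Variables (R : realFieldType) (I : finType).
Implicit Types (A B : pred I) (F : I -> R).

Lemma sum_sqr_le_sqr_sum A F : (forall i, 0 <= F i) ->
  \sum_(i | A i) F i ^+ 2 <= (\sum_(i | A i) F i) ^+ 2.
Proof.
move=> F0; have : \sum_(i | A i) F i ^+ 2 <= (\sum_(i | A i) F i) ^+ 2 /\
                   0 <= \sum_(i | A i) F i.
  elim/big_rec2: _ => [|i s1 s2 _ [le_s ge0_s2]]; first by rewrite expr0n.
  by have := F0 i; split; nra.
by case.
Qed.

Lemma sqr_sum_le_card A F :
  (\sum_(i | A i) F i) ^+ 2 <= #|A|%:R * \sum_(i | A i) F i ^+ 2.
Proof.
have AMGM i j : F i * F j <= (F i ^+ 2 + F j ^+ 2) / 2.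
  by have := sqr_ge0 (F i - F j); lra.
rewrite expr2 big_distrlr /=.
apply: (le_trans (ler_sum _ (fun i _ => ler_sum _ (fun j _ => AMGM i j)))).
have cardA : #|[pred i | A i]| = #|A| by apply: eq_card.
set S := \sum_(i | A i) F i ^+ 2.
have -> : \sum_(i | A i) \sum_(j | A j) (F i ^+ 2 + F j ^+ 2) / 2 =
          (S *+ #|A| + S *+ #|A|) / 2.
  under eq_bigr => i _ do rewrite -mulr_suml big_split /= sumr_const.
  by rewrite -mulr_suml big_split /= sumrMnl sumr_const /S.
by rewrite -mulr2n -[_ *+ 2]mulr_natr mulfK ?pnatr_eq0 // mulr_natl.
Qed.

Lemma sqr_sum_le_card_support A (B : {pred I}) F :
  (forall i, A i -> F i != 0 -> i \in B) ->
  (\sum_(i | A i) F i) ^+ 2 <= #|B|%:R * \sum_(i | A i) F i ^+ 2.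
Proof.
move=> supp.
have restrict (G : I -> R) : (forall i, A i -> i \notin B -> G i = 0) ->
    \sum_(i | A i) G i = \sum_(i | A i && (i \in B)) G i.
  move=> G0; rewrite (bigID (mem B)) /= [X in _ + X]big1 ?addr0 //.
  by move=> i /andP[]; exact: G0.
have F0 i : A i -> i \notin B -> F i = 0.
  by move=> Ai; apply: contraNeq; exact: supp.
rewrite (restrict _ F0) (restrict (fun i => F i ^+ 2)); last first.
  by move=> i Ai nBi; rewrite F0 // expr0n.
apply: le_trans (sqr_sum_le_card _ _) _.
rewrite ler_wpM2r ?sumr_ge0 // => [i _|]; first exact: sqr_ge0.
rewrite ler_nat; apply: subset_leq_card; apply/fintype.subsetP => i.
by move=> /andP[].
Qed.

End SumOfSquares.

Section DyadicPieces.
Variables (R : realType) (th0 : R -> R).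
Hypothesis th0_out : forall t, 2 < `|t| -> th0 t = 0.
Hypothesis th0_in : forall t, `|t| <= 1 -> th0 t = 1.

Let normr_divX (t : R) k : `|t / 2 ^+ k| = `|t| / 2 ^+ k.
Proof. by rewrite normrM normfV normrX (ger0_norm (ler0n _ 2)). Qed.

Lemma theta_neq0_le j t : theta th0 j t != 0 -> `|t| <= 2 ^+ j.+1.
Proof.
apply: contraTT; rewrite -ltNge negbK => ht; apply/eqP.
case: j ht => [|j] ht /=; first by rewrite th0_out // -(expr1 (2:R)).
rewrite !th0_out ?subrr // normr_divX ltr_pdivlMr ?exprn_gt0 //.
by apply: le_lt_trans ht; rewrite !exprS mulrA ler_pM2r ?exprn_gt0 //; lra.
Qed.

Lemma theta_neq0_gt j t : (0 < j)%N -> theta th0 j t != 0 -> 2 ^+ j.-1 < `|t|.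
Proof.
case: j => [//|j] _; apply: contraTT; rewrite -leNgt negbK => ht; apply/eqP => /=.
rewrite !th0_in ?subrr // normr_divX ler_pdivrMr ?exprn_gt0 // mul1r //.
by apply: le_trans ht _; rewrite exprS ler_peMl ?exprn_ge0 //; lra.
Qed.

Lemma theta_neq0_leqS j k t :
  theta th0 j t != 0 -> theta th0 k t != 0 -> (k <= j.+1)%N.
Proof.
move=> thj thk; rewrite leqNgt; apply/negP => ltjk.
have k_gt0 : (0 < k)%N by lia.
have := theta_neq0_gt k_gt0 thk; have := theta_neq0_le thj.
have : (2 : R) ^+ j.+1 <= 2 ^+ k.-1 by rewrite ler_eXn2l ?ltr1n //; lia.
lra.
Qed.

Lemma theta_support t :
  exists m, forall j, theta th0 j t != 0 -> (j == m) || (j == m.+1).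
Proof.
have [some|none] := pselect (exists j, theta th0 j t != 0); last first.
  by exists 0%N => j thj; case: none; exists j.
case: (ex_minnP some) => m thm minm; exists m => k thk.
have := minm _ thk; have := theta_neq0_leqS thm thk; lia.
Qed.

Lemma card_theta_support N t :
  (#|[set i : 'I_N | theta th0 i t != 0%R]| <= 2)%N.
Proof.
have [m suppm] := theta_support t.
rewrite cardE -(size_map val).
apply: (@uniq_leq_size _ _ [:: m; m.+1]).
  by rewrite map_inj_uniq ?enum_uniq //; exact: val_inj.
move=> _ /mapP[i + ->]; rewrite mem_enum finset.in_set => /suppm.
by rewrite !inE.
Qed.

Hypothesis theta_ge0 : forall j t, 0 <= theta th0 j t.

Lemma sqr_sum_phi_sandwich N (P : pred ('I_N * 'I_N)) xi :
  let Q := \sum_(p | P p) phi th0 p.1 p.2 xi ^+ 2 in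
  4^-1 * Q <= (\sum_(p | P p) phi th0 p.1 p.2 xi) ^+ 2 <= 4 * Q.
Proof.
set T1 := [set i : 'I_N | theta th0 i xi.1 != 0].
set T2 := [set i : 'I_N | theta th0 i xi.2 != 0].
have supp p : P p -> phi th0 p.1 p.2 xi != 0 -> p \in finset.setX T1 T2.
  by move=> _; rewrite /phi mulf_eq0 negb_or !finset.inE.
have card_supp : #|finset.setX T1 T2|%:R <= 4 :> R.
  by rewrite cardsX (_ : 4 = (2 * 2)%N%:R) // ler_nat leq_mul ?card_theta_support.
have Q0 : 0 <= \sum_(p | P p) phi th0 p.1 p.2 xi ^+ 2.
  by rewrite sumr_ge0 // => p _; exact: sqr_ge0.
have := sum_sqr_le_sqr_sum P (fun p => mulr_ge0 (theta_ge0 p.1 xi.1) (theta_ge0 p.2 xi.2)).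
have := sqr_sum_le_card_support supp.
move=> /= hi lo; apply/andP; split; [lra | nra].
Qed.

End DyadicPieces.

Section IntegralComparison.
Local Open Scope ereal_scope.
Context d (T : measurableType d) (R : realType) (mu : {measure set T -> \bar R}).
Variables (D : set T) (mD : measurable D).

Lemma measurable_fsum (I : finType) (P : pred I) (h : I -> T -> R) :
  (forall i, measurable_fun D (h i)) ->
  measurable_fun D (fun x => \sum_(i | P i) h i x)%R.
Proof. by move=> mh; under eq_fun do rewrite -big_filter; exact: measurable_sum. Qed.

Lemma ge0_integral_fsum (I : finType) (P : pred I) (f : I -> T -> R) :
  (forall i, measurable_fun D (f i)) -> (forall i x, D x -> (0 <= f i x)%R) ->
  \int[mu]_(x in D) (\sum_(i | P i) f i x)%R%:E =
  \sum_(i | P i) \int[mu]_(x in D) (f i x)%:E.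
Proof.
move=> mf f0; rewrite -big_filter -ge0_integral_sum //; last first.
  by move=> i; apply/measurable_EFinP.
by apply: eq_integral => x _; rewrite big_filter sumEFin.
Qed.

Lemma ge0_le_integral_sandwich (f g : T -> R) (c : R) :
  measurable_fun D f -> measurable_fun D g -> (forall x, D x -> 0 <= g x)%R ->
  (0 < c)%R -> (forall x, D x -> c^-1 * g x <= f x <= c * g x)%R ->
  (c^-1)%:E * \int[mu]_(x in D) (g x)%:E <= \int[mu]_(x in D) (f x)%:E /\
  \int[mu]_(x in D) (f x)%:E <= c%:E * \int[mu]_(x in D) (g x)%:E.
Proof.
move=> mf mg g0 c_gt0 fg.
have mfE : measurable_fun D (fun x => (f x)%:E) by apply/measurable_EFinP.
have mgE : measurable_fun D (fun x => (g x)%:E) by apply/measurable_EFinP.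
have mcg (k : R) : measurable_fun D (fun x => (k * g x)%:E).
  by apply/measurable_EFinP; exact: (measurable_funM (measurable_cst k) mg).
have cg0 x : D x -> 0 <= (c^-1 * g x)%:E.
  by move=> Dx; rewrite lee_fin mulr_ge0 ?g0 // invr_ge0 ltW.
have f0 x : D x -> 0 <= (f x)%:E.
  by move=> Dx; apply: le_trans (cg0 x Dx) _; rewrite lee_fin; case/andP: (fg x Dx).
rewrite -!ge0_integralZl_EFin ?invr_ge0 ?(ltW c_gt0) //.
under eq_integral do rewrite -EFinM.
under [X in _ /\ _ <= X]eq_integral do rewrite -EFinM.
split; apply: ge0_le_integral => //.
all: by move=> x Dx; rewrite lee_fin; case/andP: (fg x Dx).
Qed.

End IntegralComparison.

Section PlaneL2Norms.
Variable R : realType.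

Lemma schwartz_measurable (f : R -> R) : schwartz f -> measurable_fun setT f.
Proof.
move=> [derf _]; apply: continuous_measurable_fun => x.
by apply: differentiable_continuous; apply/derivable1_diffP; exact: (derf 0%N x).
Qed.

Lemma measurable_theta (th0 : R -> R) k :
  measurable_fun setT th0 -> measurable_fun setT (theta th0 k).
Proof.
move=> mth0; case: k => [//|k] /=.
by apply: measurable_funB; apply: (measurableT_comp mth0); exact: mulrr_measurable.
Qed.

Lemma measurable_phi (th0 : R -> R) j1 j2 :
  measurable_fun setT th0 -> measurable_fun setT (phi th0 j1 j2).
Proof.
move=> mth0; apply: measurable_funM.
- exact: measurableT_comp (measurable_theta j1 mth0) measurable_fst.
- exact: measurableT_comp (measurable_theta j2 mth0) measurable_snd.
Qed.

Lemma L2sqE (h u v : R * R -> R) :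
  L2sq h u v = (\int[@leb2 R]_(xi in setT) (h xi ^+ 2 * (u xi ^+ 2 + v xi ^+ 2))%:E)%E.
Proof. by apply: eq_integral => xi _; congr EFin; ring. Qed.

Lemma L2sq_sandwich (I : finType) (P : pred I) (h : I -> R * R -> R)
    (g u v : R * R -> R) (c : R) :
  (forall i, measurable_fun setT (h i)) -> measurable_fun setT g ->
  measurable_fun setT u -> measurable_fun setT v -> 0 < c ->
  (forall xi, let Q := \sum_(i | P i) h i xi ^+ 2 in c^-1 * Q <= g xi ^+ 2 <= c * Q) ->
  ((c^-1)%:E * (\sum_(i | P i) L2sq (h i) u v) <= L2sq g u v)%E /\
  (L2sq g u v <= c%:E * (\sum_(i | P i) L2sq (h i) u v))%E.
Proof.
move=> mh mg mu mv c_gt0 hg.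
pose w xi := u xi ^+ 2 + v xi ^+ 2.
have mw : measurable_fun setT w by apply: measurable_funD; exact: measurable_funX.
have w0 xi : 0 <= w xi by rewrite addr_ge0 ?sqr_ge0.
have mh2 i : measurable_fun setT (fun xi => h i xi ^+ 2) by exact: measurable_funX.
have mh2w i : measurable_fun setT (fun xi => h i xi ^+ 2 * w xi).
  exact: measurable_funM.
have h2w0 i xi : 0 <= h i xi ^+ 2 * w xi by rewrite mulr_ge0 ?sqr_ge0.
rewrite L2sqE; under eq_bigr do rewrite L2sqE.
rewrite -ge0_integral_fsum //.
apply: ge0_le_integral_sandwich => //.
- by apply: measurable_funM => //; exact: measurable_funX.
- exact: measurable_fsum.
- by move=> xi _; rewrite sumr_ge0.
move=> xi _; rewrite -big_distrl /=.
have := w0 xi; have /andP[] := hg xi; rewrite /w; nra.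
Qed.

End PlaneL2Norms.

Theorem lemma4 (R : realType) (th0 : R -> R) (a1 a2 : R) :
  schwartz th0 ->
  (forall t, 0 <= th0 t) ->
  (forall t, 2 < `|t| -> th0 t = 0) ->
  (forall t, `|t| <= 1 -> th0 t = 1) ->
  (forall (j : nat) t, (0 < j)%N -> 0 <= theta th0 j t) ->
  0 <= a1 -> 0 <= a2 -> a1 + a2 = 2 ->
  exists C : R, 0 < C /\
    forall (j : nat) (u v : R * R -> R), locL2 u v ->
      let S := (\sum_(j1 < gbound j) \sum_(j2 < gbound j | inGamma a1 a2 j j1 j2)
                  L2sq (phi th0 j1 j2) u v)%E in
      ((C^-1)%:E * S <= L2sq (gfun th0 a1 a2 j) u v)%E /\
      (L2sq (gfun th0 a1 a2 j) u v <= C%:E * S)%E.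
Proof.
move=> sth0 th0_ge0 th0_out th0_in theta_ge0 _ _ _.
have mth0 := schwartz_measurable sth0.
have theta0 k t : 0 <= theta th0 k t.
  by case: k => [|k]; [exact: th0_ge0 | exact: theta_ge0].
exists 4; split => // j u v [mu [mv _]] S; rewrite /S pair_big_dep /=.
apply: L2sq_sandwich => //.
- by move=> p; exact: measurable_phi.
- by do 2 apply: measurable_fsum => ?; exact: measurable_phi.
- by move=> xi; rewrite /gfun pair_big_dep; exact: sqr_sum_phi_sandwich.
Qed.
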